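(* Let $T=(V,E)$ be a tree, $w:V\to\mathbb R_{\ge 0}$, and $C$ a total coloring of $V$. For every color $d\in C(V)$ let $$p^*_d=\min\{\mathrm{penalty}_{C,d}(V(T')) : T' \text{ a nonempty connected subtree of } T\}.$$ Then for every convex (total) recoloring $C'$ of $C$, $$\sum_{d\in C(V)} p^*_d\le 2\,\mathrm{cost}_C(C').$$ In particular $\sum_{d\in C(V)}p^*_d\le 2\,\mathrm{OPT}(T,C,w)$.
   Context: For a color $d$ and $U\subseteq V$, $\mathrm{penalty}_{C,d}(U)=w\big(U\setminus C^{-1}(d)\big)+w\big((V\setminus U)\cap C^{-1}(d)\big)$, where $w(X)=\sum_{v\in X}w(v)$. A coloring is convex if each color class induces a connected subtree (or is empty). $\mathrm{cost}_C(C')=w(\{v: C'(v)\neq C(v)\})$, and $\mathrm{OPT}(T,C,w)$ is the minimum of $\mathrm{cost}_C(C')$ over all convex colorings $C'$ of $T$. *)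

From mathcomp Require Import all_boot all_order all_algebra.
Set Implicit Arguments. Unset Strict Implicit. Unset Printing Implicit Defensive.
Import Order.TTheory GRing.Theory Num.Theory.
Local Open Scope ring_scope.

Section Defs.
Variable V : finType.

Definition simple_graph (e : rel V) : Prop := symmetric e /\ irreflexive e.

Definition acyclic (e : rel V) : Prop :=
  forall p : seq V, uniq p -> (2 < size p)%N -> ~~ cycle e p.

Definition graph_connected (e : rel V) : Prop := forall x y : V, connect e x y.

Definition is_tree (e : rel V) : Prop :=
  simple_graph e /\ graph_connected e /\ acyclic e.

(* U induces a connected subgraph (the empty set counts as connected). *)
Definition induced_connected (e : rel V) (U : {set V}) : bool :=
  [forall x in U, forall y in U,
    connect [rel a b | [&& e a b, a \in U & b \in U]] x y].

Variable R : realFieldType.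

Definition wsum (w : V -> R) (X : {set V}) : R := \sum_(v in X) w v.

Variable K : finType.

Definition penalty (C : V -> K) (w : V -> R) (d : K) (U : {set V}) : R :=
  wsum w (U :\: [set v | C v == d]) + wsum w (~: U :&: [set v | C v == d]).

Definition convex_coloring (e : rel V) (C' : V -> K) : Prop :=
  forall d : K, induced_connected e [set v | C' v == d].

Definition cost (C : V -> K) (w : V -> R) (C' : V -> K) : R :=
  wsum w [set v | C' v != C v].

(* The seed value
   penalty [set: V] is itself one of the candidates whenever V is nonempty
   (the whole tree is connected), so this is exactly the minimum. *)
Definition pstar (e : rel V) (C : V -> K) (w : V -> R) (d : K) : R :=
  \big[Num.min/penalty C w d [set: V]]_(U : {set V} |
       induced_connected e U && (U != set0)) penalty C w d U.
End Defs.

(** The penalty of a color class of [C'] counts, for every vertex recolored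
    from [C v] to [C' v], the weight [w v] exactly twice: once for [C' v]
    (a vertex of the class with the wrong original color) and once for [C v]
    (a vertex of the original color outside the class).  Convexity makes every
    nonempty class of [C'] a candidate for [pstar], and an empty class is beaten
    by any singleton of the right original color, so [pstar d] is at most the
    penalty of the [d]-class of [C'] for every color [d] of [C]. *)

From mathcomp Require Import all_boot all_order all_algebra.
Set Implicit Arguments. Unset Strict Implicit. Unset Printing Implicit Defensive.
Import Order.TTheory GRing.Theory Num.Theory.
Local Open Scope ring_scope.

Section Penalty.
Variables (V K : finType) (R : realFieldType) (w : V -> R) (C : V -> K).

Lemma wsum_subset (A B : {set V}) :
  (forall v, 0 <= w v) -> A \subset B -> wsum w A <= wsum w B.
Proof.
move=> w_ge0 AB; rewrite /wsum [leRHS](bigID (mem A)) /= -(setIidPr AB).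
rewrite [X in _ <= X + _](eq_bigl (mem (B :&: A))) ?lerDl ?sumr_ge0 // => v.
by rewrite !inE andbA andbb.
Qed.

Lemma penalty_ge0 d U : (forall v, 0 <= w v) -> 0 <= penalty C w d U.
Proof. by move=> w_ge0; rewrite addr_ge0 // sumr_ge0. Qed.

Lemma penalty_set1_le_set0 v :
  (forall v, 0 <= w v) -> penalty C w (C v) [set v] <= penalty C w (C v) set0.
Proof.
move=> w_ge0; rewrite /penalty setC0 setTI set0D.
have -> : [set v] :\: [set x | C x == C v] = set0.
  by apply/setP => x; rewrite !inE; case: (x =P v) => [->|]; rewrite ?eqxx ?andbF.
by rewrite /wsum !big_set0 !add0r; apply: wsum_subset => //; apply: subsetIr.
Qed.

Lemma sum_penalty_classes (C' : V -> K) :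
  \sum_d penalty C w d [set v | C' v == d] = 2 * cost C w C'.
Proof.
have penaltyE d : penalty C w d [set v | C' v == d] =
    \sum_v ((if (C' v == d) && (C v != d) then w v else 0) +
            (if (C' v != d) && (C v == d) then w v else 0)).
  rewrite /penalty /wsum !(big_mkcond (fun v => v \in _)) -big_split /=.
  by apply: eq_bigr => v _; rewrite !inE; do 2!case: eqP.
under eq_bigr do rewrite penaltyE.
rewrite exchange_big /cost /wsum mulr_sumr [RHS]big_mkcond /=.
apply: eq_bigr => v _; rewrite inE big_split /= -!big_mkcond.
have [Ev|NEv] := eqVneq (C' v) (C v).
  by rewrite !big_pred0 ?addr0 // => d; rewrite Ev; case: eqP.
rewrite (eq_bigl (pred1 (C' v))) => [|d]; last first.
  by rewrite /= eq_sym; case: eqP => [->|//]; rewrite eq_sym NEv.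
rewrite [X in _ + X](eq_bigl (pred1 (C v))) => [|d]; last first.
  by rewrite /= [C v == d]eq_sym; case: (d =P C v) => [->|]; rewrite ?andbF ?andbT.
by rewrite /= !big_pred1_eq mulr2n mulrDl mul1r.
Qed.

End Penalty.

Section PstarBound.
Variables (V K : finType) (R : realFieldType) (e : rel V) (w : V -> R) (C : V -> K).
Hypothesis w_ge0 : forall v, 0 <= w v.

Lemma pstar_le_penalty d U :
  induced_connected e U -> U != set0 -> pstar e C w d <= penalty C w d U.
Proof. by move=> Ucon Un0; apply: bigmin_le_cond; rewrite Ucon Un0. Qed.

Lemma induced_connected1 v : induced_connected e [set v].
Proof.
apply/forallP => x; apply/implyP; rewrite inE => /eqP ->.
by apply/forallP => y; apply/implyP; rewrite inE => /eqP ->; apply: connect0.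
Qed.

Lemma pstar_le_penalty_class (C' : V -> K) v :
  convex_coloring e C' ->
  pstar e C w (C v) <= penalty C w (C v) [set x | C' x == C v].
Proof.
move=> convC'; have [class0|class_n0] := eqVneq [set x | C' x == C v] set0.
  rewrite class0; apply: le_trans (penalty_set1_le_set0 C v w_ge0).
  apply: pstar_le_penalty; first exact: induced_connected1.
  by apply/set0Pn; exists v; rewrite inE.
exact: pstar_le_penalty.
Qed.

End PstarBound.

Theorem mainTheorem3 (V : finType) (e : rel V) (R : realFieldType)
  (K : finType) (w : V -> R) (C : V -> K) :
  is_tree e ->
  (forall v, 0 <= w v) ->
  forall C' : V -> K, convex_coloring e C' ->
    \sum_(d in [set C v | v in V]) pstar e C w d <= 2 * cost C w C'.
Proof.
move=> _ w_ge0 C' convC'; rewrite -(sum_penalty_classes w C C').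
apply: le_trans (_ : \sum_(d in [set C v | v in V])
                       penalty C w d [set x | C' x == d] <= _).
  apply: ler_sum => _ /imsetP [v _ ->].
  exact: pstar_le_penalty_class.
rewrite [leRHS](bigID (mem [set C v | v in V])) /= lerDl.
by apply: sumr_ge0 => d _; apply: penalty_ge0.
Qed.
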